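(* Assume $1/2\in\Phi$. (i) Let $L_1\oplus L_2$ be a $\mathbb{Z}$-graded Lie algebra over $\Phi$ (so $[L_1,L_1]\subseteq L_2$ and all other brackets vanish). Then $L_1\oplus L_2$, viewed inside $L_1\times L_2$ with bilinear map $\psi_L(a,c)=[a,c]/2$, is a vector group with operation $(a,b)(c,d) = (a+c,\, b+d+[a,c]/2)$. (ii) Every vector group $G\le A\times B$ over $\Phi$ is isomorphic, as a group (compatibly with both scalar multiplications and with the subgroups of second components), to the vector group $L$ associated by (i) to the graded Lie algebra $\mathrm{Lie}(G)$, via the map $(a,b)\mapsto(a,\, b-\psi(a,a)/2)$. (iii) This mapping induces, for every commutative associative unital $\Phi$-algebra $K$, a $\Phi$-group epimorphism $\hat L(K)\to\hat G(K)$. Hence condition (3) of the definition of vector group (surjectivity of $G_2\otimes_\Phi K\to\hat G(K)_2$) also holds when $1/2\in\Phi$.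
   Context: $\Phi$ is a commutative unital ring. Given $\Phi$-modules $A,B$ and a $\Phi$-bilinear $\psi : A\times A\to B$, make $A\times B$ a group via $(a,b)(c,d) = (a+c,\, b+d+\psi(a,c))$, with scalar multiplications $\lambda\cdot_1(a,b) = (\lambda a,\lambda^2 b)$ and, only on $0\times B$, $\lambda\cdot_2(0,b) = (0,\lambda b)$; the same formulas with $\psi$ extended $K$-bilinearly make sense on $(A\otimes K)\times(B\otimes K)$ for a commutative associative unital $\Phi$-algebra $K$, $\lambda\in K$. A subgroup $G\le A\times B$ is an almost vector group if it is closed under $\lambda\cdot_1$ ($\lambda\in\Phi$) and $G_2:=G\cap(0\times B)$ is closed under $\lambda\cdot_2$ ($\lambda\in\Phi$). $\hat G(K)$ is the smallest subgroup of $(A\otimes K)\times(B\otimes K)$ containing the images of all $g\in G$, closed under $\lambda\cdot_1$ ($\lambda\in K$), whose intersection $\hat G(K)_2$ with $0\times(B\otimes K)$ is closed under $\lambda\cdot_2$ ($\lambda\in K$). A vector group is an almost vector group such that, if $1/2\notin\Phi$, the natural map $G_2\otimes_\Phi K\to\hat G(K)_2$ is surjective for all $K$ (condition (3)); when $1/2\in\Phi$ every almost vector group is by definition a vector group. With $\Phi[\epsilon]$ the dual numbers and $\pi:\Phi[\epsilon]\to\Phi$ the projection, $\mathrm{Lie}(G) := \ker\hat G(\pi)=\{(\epsilon a,\epsilon b)\in\hat G(\Phi[\epsilon])\}$; as a module it is $\pi_A(G)\oplus G_2$ (first coordinates of elements of $G$, and $G_2$), graded with $\pi_A(G)$ in degree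 1 and $G_2$ in degree 2, and with bracket $[(a,b),(c,d)] = (0,\psi(a,c)-\psi(c,a))$. *)

From HB Require Import structures.
From mathcomp Require Import all_boot all_order all_algebra.
Set Implicit Arguments. Unset Strict Implicit. Unset Printing Implicit Defensive.
Import GRing.Theory.
Local Open Scope ring_scope.

Section VectorGroupOps.
Variables (R : pzRingType) (U V : lmodType R) (phi : U -> U -> V).

Definition is_bilin : Prop :=
  (forall (r : R) x y z, phi (r *: x + y) z = r *: phi x z + phi y z) /\
  (forall (r : R) x y z, phi z (r *: x + y) = r *: phi z x + phi z y).

Definition vmul (x y : U * V) : U * V := (x.1 + y.1, x.2 + y.2 + phi x.1 y.1).
Definition vinv (x : U * V) : U * V := (- x.1, - x.2 + phi x.1 x.1).
Definition smul1 (l : R) (x : U * V) : U * V := (l *: x.1, (l * l) *: x.2).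
(* lambda .2 (0,b) = (0, lambda b)  (only used on 0 x V) *)
Definition smul2 (l : R) (x : U * V) : U * V := (x.1, l *: x.2).

Definition is_subgroup (G : U * V -> Prop) : Prop :=
  G (0, 0) /\ (forall x y, G x -> G y -> G (vmul x y)) /\
  (forall x, G x -> G (vinv x)).

Definition almost_vg (G : U * V -> Prop) : Prop :=
  is_subgroup G /\ (forall l x, G x -> G (smul1 l x)) /\
  (forall l b, G (0, b) -> G (smul2 l (0, b))).
End VectorGroupOps.

Section BaseChange.
Variables (Phi : comPzRingType) (K : comAlgType Phi).

Definition klinear (M N : lmodType K) (g : M -> N) : Prop :=
  forall (k : K) x y, g (k *: x + y) = k *: g x + g y.

(* [iota : U -> M] exhibits the K-module M as (P tensor_Phi K), where P is
   the Phi-submodule of U given by the predicate P, iota p = p (x) 1: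
   iota is Phi-linear on P, and it is universal among Phi-linear maps from P
   to K-modules (existence and uniqueness of the K-linear factorization). *)
Definition tensor_on (U : lmodType Phi) (P : U -> Prop) (M : lmodType K)
    (iota : U -> M) : Prop :=
  (forall x y, P x -> P y -> iota (x + y) = iota x + iota y) /\
  (forall (r : Phi) x, P x -> iota (r *: x) = r%:A *: iota x) /\
  (forall (N : lmodType K) (f : U -> N),
     (forall x y, P x -> P y -> f (x + y) = f x + f y) ->
     (forall (r : Phi) x, P x -> f (r *: x) = r%:A *: f x) ->
     exists g : M -> N, klinear g /\ forall x, P x -> g (iota x) = f x) /\
  (forall (N : lmodType K) (g g' : M -> N), klinear g -> klinear g' ->
     (forall x, P x -> g (iota x) = g' (iota x)) -> forall m, g m = g' m).

(* phiK : MU -> MU -> MV is the K-bilinear extension of phi (restricted to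
   P x P) along iotaU, iotaV:  phiK (a (x) 1) (c (x) 1) = phi a c (x) 1. *)
Definition bilin_ext (U V : lmodType Phi) (P : U -> Prop) (phi : U -> U -> V)
    (MU MV : lmodType K) (iotaU : U -> MU) (iotaV : V -> MV)
    (phiK : MU -> MU -> MV) : Prop :=
  is_bilin phiK /\
  forall a c, P a -> P c -> phiK (iotaU a) (iotaU c) = iotaV (phi a c).

(* hat G (K): the smallest subgroup of (MU x MV, phiK) containing the images
   (g.1 (x) 1, g.2 (x) 1) of all g in G, closed under .1 (lambda in K),
   whose intersection with 0 x MV is closed under .2 (lambda in K). *)
Definition hatG (U V : lmodType Phi) (G : U * V -> Prop)
    (MU MV : lmodType K) (iotaU : U -> MU) (iotaV : V -> MV)
    (phiK : MU -> MU -> MV) : MU * MV -> Prop :=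
  fun z => forall H : MU * MV -> Prop, almost_vg phiK H ->
    (forall g, G g -> H (iotaU g.1, iotaV g.2)) -> H z.

(* condition (3): the natural map G_2 (x)_Phi K -> hat G(K)_2 is surjective,
   i.e. every (0,y) in hat G(K) has y in the image sum_i k_i (b_i (x) 1),
   b_i in G_2. *)
Definition cond3 (U V : lmodType Phi) (G : U * V -> Prop)
    (MU MV : lmodType K) (iotaU : U -> MU) (iotaV : V -> MV)
    (phiK : MU -> MU -> MV) : Prop :=
  forall y : MV, hatG G iotaU iotaV phiK (0, y) ->
    exists s : seq (K * V), (forall p, p \in s -> G (0, p.2)) /\
      y = \sum_(p <- s) p.1 *: iotaV p.2.
End BaseChange.

Definition vector_group (Phi : comPzRingType) (U V : lmodType Phi)
    (phi : U -> U -> V) (G : U * V -> Prop) : Prop :=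
  almost_vg phi G /\
  (~ (exists h : Phi, 2%:R * h = 1) ->
   forall (K : comAlgType Phi) (MU MV : lmodType K) (iotaU : U -> MU)
     (iotaV : V -> MV) (phiK : MU -> MU -> MV),
     tensor_on (fun _ => True) iotaU -> tensor_on (fun _ => True) iotaV ->
     bilin_ext (fun _ => True) phi iotaU iotaV phiK ->
     cond3 G iotaU iotaV phiK).

(** * Lie(G) = pi_A(G) (+) G_2 with bracket [(a,b),(c,d)] = (0, psi(a,c)-psi(c,a)) *)
Section LieOfG.
Variables (Phi : comPzRingType) (A B : lmodType Phi) (psi : A -> A -> B)
  (G : A * B -> Prop).
Definition LieG1 (a : A) : Prop := exists b, G (a, b).
Definition LieG2 (b : B) : Prop := G (0, b).
Definition LieG_br (a c : A) : B := psi a c - psi c a.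
End LieOfG.

(* With h = 1/2 every bilinear psi splits as psi(a,c) = skew(a,c) + h (psi(a,c) + psi(c,a)),
   and the shear (a, b) |-> (a, b - h psi(a,a)) carries the group law of psi to that of its
   skew part, compatibly with both scalar multiplications.  It maps a vector group G onto
   pi_A(G) x G_2, because for x = (a, b) in G the element x ((-1) ._1 x) = (0, 2b - psi(a,a))
   lies in G_2.  Preimages and images of almost vector groups under such morphisms are again
   almost vector groups, so by minimality of the hat construction the shear, composed with the
   maps L_i (x) K -> A (x) K, B (x) K, sends hat L(K) onto hat G(K).  For condition (3), the
   preimage under the shear of span(pi_A G) x span(G_2) is an almost vector group containing
   G, hence containing hat G(K). *)

From HB Require Import structures.
From mathcomp Require Import all_boot all_order all_algebra.
Import GRing.Theory.
Local Open Scope ring_scope.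
Set Implicit Arguments. Unset Strict Implicit.

Section LinearProp.
Variables (R : pzRingType) (M N : lmodType R) (f : M -> N).
Hypothesis linf : linear f.

Lemma linD x y : f (x + y) = f x + f y.
Proof. by have := linf 1 x y; rewrite !scale1r. Qed.

Lemma lin0 : f 0 = 0.
Proof. by apply: (addIr (f 0)); rewrite -linD !add0r. Qed.

Lemma linZ k x : f (k *: x) = k *: f x.
Proof. by rewrite -[k *: x]addr0 linf lin0 addr0. Qed.

Lemma linN x : f (- x) = - f x.
Proof. by rewrite -scaleN1r linZ scaleN1r. Qed.
End LinearProp.

Section Bilinear.
Variables (R : comPzRingType) (U V : lmodType R) (phi : U -> U -> V).
Hypothesis bphi : is_bilin phi.

Lemma bilin_linl z : linear (phi^~ z). Proof. by move=> k x y; apply: bphi.1. Qed.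
Lemma bilin_linr z : linear (phi z). Proof. by move=> k x y; apply: bphi.2. Qed.

Lemma bilin0l z : phi 0 z = 0. Proof. exact: lin0 (bilin_linl z). Qed.
Lemma bilin0r z : phi z 0 = 0. Proof. exact: lin0 (bilin_linr z). Qed.
Lemma bilinDl x y z : phi (x + y) z = phi x z + phi y z. Proof. exact: linD (bilin_linl z) x y. Qed.
Lemma bilinDr x y z : phi z (x + y) = phi z x + phi z y. Proof. exact: linD (bilin_linr z) x y. Qed.
Lemma bilinNr x z : phi z (- x) = - phi z x. Proof. exact: linN (bilin_linr z) x. Qed.
Lemma bilinZl k x z : phi (k *: x) z = k *: phi x z. Proof. exact: linZ (bilin_linl z) k x. Qed.
Lemma bilinZr k x z : phi z (k *: x) = k *: phi z x. Proof. exact: linZ (bilin_linr z) k x. Qed.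

Lemma bilin_postcomp (W : lmodType R) (g : V -> W) :
  linear g -> is_bilin (fun x y => g (phi x y)).
Proof. by move=> ling; split=> k x y z; rewrite ?bilinDl ?bilinDr ?bilinZl ?bilinZr ling. Qed.

Lemma bilin_precomp (T : lmodType R) (j : T -> U) :
  linear j -> is_bilin (fun x y => phi (j x) (j y)).
Proof. by move=> linj; split=> k x y z; rewrite linj ?bilinDl ?bilinDr ?bilinZl ?bilinZr. Qed.
End Bilinear.

Lemma addr_half (R : pzRingType) (h : R) : 2%:R * h = 1 -> h + h = 1.
Proof. by move=> Hh; rewrite -mulr2n -mulr_natl. Qed.

Section GroupLaw.
Variables (R : comPzRingType) (U V : lmodType R) (phi : U -> U -> V).
Hypothesis bphi : is_bilin phi.

Lemma vmulV x : vmul phi x (vinv phi x) = (0, 0).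
Proof. by rewrite /vmul /vinv /= subrr (bilinNr bphi) addrA addrK subrr. Qed.

Lemma vmulI x : injective (vmul phi x).
Proof. by case=> c d [c' d'] [/addrI <-] /addIr /addrI ->. Qed.

Lemma vmul_smulN1 x : vmul phi x (smul1 (-1) x) = (0, x.2 + x.2 - phi x.1 x.1).
Proof. by rewrite /vmul /smul1 /= scaleN1r subrr mulrNN mulr1 scale1r (bilinNr bphi). Qed.
End GroupLaw.

Definition vg_morphism (R : pzRingType) (U V U' V' : lmodType R)
    (phi : U -> U -> V) (phi' : U' -> U' -> V') (F : U * V -> U' * V') : Prop :=
  [/\ forall x y, F (vmul phi x y) = vmul phi' (F x) (F y),
      forall l x, F (smul1 l x) = smul1 l (F x),
      forall y, (F (0, y)).1 = 0 &
      forall l y, F (smul2 l (0, y)) = smul2 l (F (0, y))].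

Lemma vg_morphism_comp (R : pzRingType) (U V U' V' U'' V'' : lmodType R)
    (phi : U -> U -> V) (phi' : U' -> U' -> V') (phi'' : U'' -> U'' -> V'')
    (F : U * V -> U' * V') (F' : U' * V' -> U'' * V'') :
  vg_morphism phi phi' F -> vg_morphism phi' phi'' F' ->
  vg_morphism phi phi'' (F' \o F).
Proof.
move=> [FM FZ1 F0 FZ2] [F'M F'Z1 F'0 F'Z2]; split=> [x y|l x|y|l y] /=.
- by rewrite FM F'M.
- by rewrite FZ1 F'Z1.
- by rewrite (surjective_pairing (F (0, y))) F0 F'0.
- by rewrite FZ2 (surjective_pairing (F (0, y))) F0 F'Z2.
Qed.

(* For h = 1/2, untwist h psi is the map f of (ii) and skew h psi is psi_L. *)
Section Twist.
Variables (R : comPzRingType) (h : R) (U V : lmodType R) (phi : U -> U -> V).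

Definition skew a c := h *: (phi a c - phi c a).
Definition untwist x := (x.1, x.2 - h *: phi x.1 x.1).
Definition twist x := (x.1, x.2 + h *: phi x.1 x.1).

Lemma untwistK : cancel untwist twist. Proof. by case=> a b; rewrite /twist /= subrK. Qed.
Lemma twistK : cancel twist untwist. Proof. by case=> a b; rewrite /untwist /= addrK. Qed.

Lemma skew_diag x : skew x x = 0. Proof. by rewrite /skew subrr scaler0. Qed.

Hypotheses (Hh : 2%:R * h = 1) (bphi : is_bilin phi).

Lemma skew_bilin : is_bilin skew.
Proof.
split=> k x y z; rewrite /skew bphi.1 bphi.2 opprD addrACA -scalerBr scalerDr;
  by rewrite scalerA mulrC -scalerA.
Qed.

Lemma sub_skew a c : phi a c - skew a c = h *: (phi a c + phi c a).
Proof.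
rewrite /skew -{1}[phi a c]scale1r -(addr_half Hh) scalerDl scalerBr opprB.
by rewrite addrA addrAC addrK -scalerDr.
Qed.

Lemma untwistM x y : untwist (vmul phi x y) = vmul skew (untwist x) (untwist y).
Proof.
case: x y => [a b] [c d]; rewrite /untwist /vmul /=; congr pair.
rewrite -[skew a c](subKr (phi a c)) sub_skew.
rewrite !(bilinDl bphi, bilinDr bphi) [phi c a + _]addrC addrACA !scalerDr.
by rewrite !opprD !addrA (ACl (1*4*2*5*3*6*7)).
Qed.
Lemma untwist_morphism : vg_morphism phi skew untwist.
Proof.
split=> [|l [a b]|//|l y]; first exact: untwistM.
  rewrite /untwist /smul1 /= (bilinZl bphi) (bilinZr bphi) scalerBr !scalerA.
  by rewrite [h * _]mulrC.
by rewrite /untwist /smul2 /= (bilin0l bphi) !scaler0 !subr0.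
Qed.

Lemma twist_morphism : vg_morphism skew phi twist.
Proof.
have [uM uZ1 _ _] := untwist_morphism.
split=> [x y|l x|//|l y].
- by apply: (can_inj untwistK); rewrite uM !twistK.
- by apply: (can_inj untwistK); rewrite uZ1 !twistK.
- by rewrite /twist /smul2 /= (bilin0l bphi) !scaler0 !addr0.
Qed.
End Twist.

Section AlmostVectorGroup.
Variables (R : comPzRingType) (U V : lmodType R) (phi : U -> U -> V) (G : U * V -> Prop).
Hypothesis HG : almost_vg phi G.

Lemma avg0 : G (0, 0). Proof. by case: HG => [[]]. Qed.
Lemma avgM x y : G x -> G y -> G (vmul phi x y).
Proof. by case: HG => [[_ [GM _]] _]; apply: GM. Qed.
Lemma avgV x : G x -> G (vinv phi x). Proof. by case: HG => [[_ [_ GV]] _]; apply: GV. Qed.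
Lemma avgZ1 l x : G x -> G (smul1 l x). Proof. by case: HG => [_ [GZ1 _]]; apply: GZ1. Qed.
Lemma avgZ2 l b : G (0, b) -> G (0, l *: b). Proof. by case: HG => [_ [_ GZ2]]; apply: GZ2. Qed.

Hypothesis bphi : is_bilin phi.

Lemma avg_sub2 a b d : G (a, b) -> G (a, d) -> G (0, b - d).
Proof.
move=> Gab Gad; have := avgM Gab (avgV Gad).
by rewrite /vmul /vinv /= subrr (bilinNr bphi) addrA addrK.
Qed.

Lemma avg2N b : G (0, b) -> G (0, - b).
Proof. by rewrite -sub0r; apply: avg_sub2 avg0. Qed.

Lemma avg2D b d : G (0, b) -> G (0, d) -> G (0, b + d).
Proof. by move=> Gb Gd; rewrite -[d]opprK; apply: avg_sub2 Gb (avg2N Gd). Qed.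

Lemma avg_comm a b c d : G (a, b) -> G (c, d) -> G (0, phi a c - phi c a).
Proof.
move=> Gab Gcd; have := avgM Gcd Gab; rewrite /vmul /= addrC [d + b]addrC => Gdc.
by have := avg_sub2 (avgM Gab Gcd) Gdc; rewrite opprD addrACA subrr add0r.
Qed.

Variables (h : R) (Hh : 2%:R * h = 1).

Lemma avg_untwist x : G x -> G (0, (untwist h phi x).2).
Proof.
move=> Gx; have := avgM Gx (avgZ1 (-1) Gx); rewrite vmul_smulN1 // => /(avgZ2 h).
by rewrite scalerBr scalerDr -scalerDl addr_half // scale1r.
Qed.

Lemma avg_twist a b d : G (a, b) -> G (0, d) -> G (twist h phi (a, d)).
Proof.
move=> Gab Gd; have := avgM Gab (avg_sub2 Gd (avg_untwist Gab)).
by rewrite /vmul /twist /= addr0 (bilin0r bphi) addr0 opprB addrCA [b + _]addrC subrK.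
Qed.
End AlmostVectorGroup.

Section MorphismImages.
Variables (R : comPzRingType) (U V U' V' : lmodType R).
Variables (phi : U -> U -> V) (phi' : U' -> U' -> V') (F : U * V -> U' * V').
Hypotheses (bphi : is_bilin phi) (bphi' : is_bilin phi') (mF : vg_morphism phi phi' F).

Let FM : forall x y, F (vmul phi x y) = vmul phi' (F x) (F y). Proof. by case: mF. Qed.
Let FZ1 : forall l x, F (smul1 l x) = smul1 l (F x). Proof. by case: mF. Qed.
Let FZ2 : forall l y, F (smul2 l (0, y)) = smul2 l (F (0, y)). Proof. by case: mF. Qed.

Lemma morph0l y : F (0, y) = (0, (F (0, y)).2).
Proof. by case: mF => _ _ F0 _; rewrite {1}(surjective_pairing (F (0, y))) F0. Qed.

Lemma morph00 : F (0, 0) = (0, 0).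
Proof. by have := FZ2 0 0; rewrite /smul2 /= !scale0r morph0l. Qed.

Lemma morph_vinv x : F (vinv phi x) = vinv phi' (F x).
Proof. by apply: (@vmulI _ _ _ phi' (F x)); rewrite -FM !vmulV // morph00. Qed.

Lemma almost_vg_preim (H : U' * V' -> Prop) :
  almost_vg phi' H -> almost_vg phi (fun x => H (F x)).
Proof.
move=> HH; split; [split; [|split] | split] => [|x y /= Hx Hy|x /= Hx|l x /= Hx|l b /= Hb].
- by rewrite morph00; exact: (avg0 HH).
- by rewrite FM; exact: (avgM HH Hx Hy).
- by rewrite morph_vinv; exact: (avgV HH Hx).
- by rewrite FZ1; exact: (avgZ1 HH _ Hx).
- by rewrite (FZ2 l b) morph0l; rewrite morph0l in Hb; exact: (avgZ2 HH _ Hb).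
Qed.

Lemma almost_vg_image (h : R) (H : U * V -> Prop) : 2%:R * h = 1 ->
  almost_vg phi H -> almost_vg phi' (fun y => exists x, H x /\ F x = y).
Proof.
move=> Hh HH; split; [split; [|split] | split].
- by exists (0, 0); split; [exact: (avg0 HH) | apply: morph00].
- move=> _ _ [x [Hx <-]] [y [Hy <-]].
  by exists (vmul phi x y); split; [exact: (avgM HH Hx Hy) | apply: FM].
- move=> _ [x [Hx <-]].
  by exists (vinv phi x); split; [exact: (avgV HH Hx) | apply: morph_vinv].
- move=> l _ [x [Hx <-]].
  by exists (smul1 l x); split; [exact: (avgZ1 HH _ Hx) | apply: FZ1].
(* A preimage x of (0, b) need not lie in 0 x V, but x ((-1) ._1 x) does and maps to (0, 2b). *)
move=> l b [x [Hx Fx]].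
have := avgM HH Hx (avgZ1 HH (-1) Hx); rewrite vmul_smulN1 //.
set c := _ + _ - _ => Hc.
have Fc : F (0, c) = (0, b + b).
  by rewrite -vmul_smulN1 // FM FZ1 Fx vmul_smulN1 // (bilin0l bphi') subr0.
exists (0, (h * l) *: c); split; first exact: (avgZ2 HH _ Hc).
by rewrite FZ2 Fc /smul2 /= scalerDr -scalerDl -mulrDl addr_half // mul1r.
Qed.
End MorphismImages.

Section HatG.
Variables (Phi : comPzRingType) (K : comAlgType Phi) (U V : lmodType Phi).
Variables (G : U * V -> Prop) (MU MV : lmodType K) (iU : U -> MU) (iV : V -> MV).
Variable phiK : MU -> MU -> MV.

Lemma hatG_avg : almost_vg phiK (hatG G iU iV phiK).
Proof.
split; [split; [|split] | split] => [|x y Hx Hy|x Hx|l x Hx|l b Hb] H HH Hgen.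
- exact: (avg0 HH).
- exact: (avgM HH (Hx H HH Hgen) (Hy H HH Hgen)).
- exact: (avgV HH (Hx H HH Hgen)).
- exact: (avgZ1 HH _ (Hx H HH Hgen)).
- exact: (avgZ2 HH _ (Hb H HH Hgen)).
Qed.

Lemma hatG_gen g : G g -> hatG G iU iV phiK (iU g.1, iV g.2).
Proof. by move=> Gg H _; apply. Qed.
End HatG.

(* span_of (LieG2 G) iB is the image of G_2 (x) K in B (x) K, as in condition (3). *)
Definition span_of (K : pzRingType) (V : eqType) (M : lmodType K)
    (Q : V -> Prop) (i : V -> M) (y : M) : Prop :=
  exists s : seq (K * V), (forall p, p \in s -> Q p.2) /\ y = \sum_(p <- s) p.1 *: i p.2.

Section Span.
Variables (K : pzRingType) (V : eqType) (M : lmodType K) (Q : V -> Prop) (i : V -> M).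

Lemma span0 : span_of Q i 0.
Proof. by exists [::]; rewrite big_nil. Qed.

Lemma span_gen v : Q v -> span_of Q i (i v).
Proof. by exists [:: (1, v)]; split=> [p /[!inE] /eqP -> //|]; rewrite big_seq1 scale1r. Qed.

Lemma spanD x y : span_of Q i x -> span_of Q i y -> span_of Q i (x + y).
Proof.
move=> [s [Qs ->]] [t [Qt ->]]; exists (s ++ t); rewrite big_cat; split=> // p.
by rewrite mem_cat => /orP [/Qs | /Qt].
Qed.

Lemma spanZ k x : span_of Q i x -> span_of Q i (k *: x).
Proof.
move=> [s [Qs ->]]; exists [seq (k * p.1, p.2) | p <- s]; split.
  by move=> _ /mapP [p ps ->]; exact: Qs p ps.
by rewrite big_map scaler_sumr; apply: eq_bigr => p _; rewrite scalerA.
Qed.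
End Span.

Lemma span_linear (K : pzRingType) (V V' : eqType) (M N : lmodType K)
    (Q : V -> Prop) (Q' : V' -> Prop) (i : V -> M) (i' : V' -> N) (f : M -> N) :
  linear f -> (forall v, Q v -> span_of Q' i' (f (i v))) ->
  forall x, span_of Q i x -> span_of Q' i' (f x).
Proof.
move=> linf fQ _ [s [Qs ->]]; elim: s Qs => [|[k v] s IH] Qs.
  by rewrite big_nil (lin0 linf); apply: span0.
rewrite big_cons linf; apply: spanD.
  by apply: spanZ; apply: fQ (Qs (k, v) (mem_head _ _)).
by apply: IH => p ps; apply: Qs; rewrite inE ps orbT.
Qed.

Section Tensor.
Variables (Phi : comPzRingType) (K : comAlgType Phi) (U : lmodType Phi) (M : lmodType K).
Variables (P : U -> Prop) (i : U -> M).
Hypothesis Ti : tensor_on P i.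

Lemma tensor_bilin_unique (N : lmodType K) (f g : M -> M -> N) :
  is_bilin f -> is_bilin g -> (forall a c, P a -> P c -> f (i a) (i c) = g (i a) (i c)) ->
  forall x y, f x y = g x y.
Proof.
case: Ti => _ [_ [_ uniq_i]] bf bg fg x y.
have fg_gen a : P a -> forall y, f (i a) y = g (i a) y.
  move=> Pa; apply: (uniq_i _ (f (i a)) (g (i a))) => [k u v|k u v|c Pc]; last exact: fg.
  - exact: bf.2.
  - exact: bg.2.
apply: (uniq_i _ (f^~ y) (g^~ y)) => [k u v|k u v|a Pa]; last exact: fg_gen.
- exact: bf.1.
- exact: bg.1.
Qed.
End Tensor.

Section TensorOnTotal.
Variables (Phi : comPzRingType) (K : comAlgType Phi) (U : lmodType Phi) (M : lmodType K).
Variables (i : U -> M).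
Hypothesis Ti : tensor_on (fun _ => True) i.

Lemma tensorD x y : i (x + y) = i x + i y. Proof. by case: Ti => iD _; apply: iD. Qed.
Lemma tensorZ r x : i (r *: x) = r%:A *: i x. Proof. by case: Ti => _ [iZ _]; apply: iZ. Qed.
Lemma tensorB x y : i (x - y) = i x - i y.
Proof. by rewrite tensorD -[- y]scaleN1r tensorZ scaleNr scale1r scaleN1r. Qed.
End TensorOnTotal.

Definition lie_set (Phi : comPzRingType) (A B : lmodType Phi) (G : A * B -> Prop)
  (x : A * B) : Prop := LieG1 G x.1 /\ LieG2 G x.2.

Section LieSet.
Variables (Phi : comPzRingType) (h : Phi) (A B : lmodType Phi) (psi : A -> A -> B).
Variable G : A * B -> Prop.
Hypotheses (Hh : 2%:R * h = 1) (bpsi : is_bilin psi) (HG : almost_vg psi G).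

Lemma LieG2_skew a c : LieG1 G a -> LieG1 G c -> LieG2 G (skew h psi a c).
Proof. by move=> [b Gab] [d Gcd]; exact: (avgZ2 HG _ (avg_comm HG bpsi Gab Gcd)). Qed.

Lemma lie_set_avg : almost_vg (skew h psi) (lie_set G).
Proof.
have G1_0 : LieG1 G 0 by exists 0; exact: (avg0 HG).
split; [split; [|split] | split].
- by split; [apply: G1_0 | exact: (avg0 HG)].
- move=> [a b] [c d] [[b' Gab'] Gb] [[d' Gcd'] Gd]; split.
    by exists (b' + d' + psi a c); exact: (avgM HG Gab' Gcd').
  apply: (avg2D HG bpsi (avg2D HG bpsi Gb Gd)).
  by apply: LieG2_skew; [exists b' | exists d'].
- move=> [a b] [[b' Gab'] Gb]; split.
    by exists (- b' + psi a a); exact: (avgV HG Gab').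
  by rewrite /LieG2 /= skew_diag addr0; exact: (avg2N HG bpsi Gb).
- move=> l [a b] [[b' Gab'] Gb]; split.
    by exists ((l * l) *: b'); exact: (avgZ1 HG _ Gab').
  exact: (avgZ2 HG _ Gb).
- by move=> l b [_ Gb]; split; [apply: G1_0 | exact: (avgZ2 HG _ Gb)].
Qed.

Lemma lie_set_untwist x : G x -> lie_set G (untwist h psi x).
Proof. by move=> Gx; split; [exists x.2; case: x Gx | exact: (avg_untwist HG bpsi Hh Gx)]. Qed.

Lemma lie_set_twist y : lie_set G y -> G (twist h psi y).
Proof. by case: y => a d [[b Gab] Gd]; exact: (avg_twist HG bpsi Hh Gab Gd). Qed.
End LieSet.

Section BaseChange.
Variables (Phi : comPzRingType) (h : Phi) (A B : lmodType Phi) (psi : A -> A -> B).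
Variable G : A * B -> Prop.
Hypotheses (Hh : 2%:R * h = 1) (bpsi : is_bilin psi) (HG : almost_vg psi G).
Variables (K : comAlgType Phi) (AK BK : lmodType K) (iA : A -> AK) (iB : B -> BK).
Variable psiK : AK -> AK -> BK.
Hypotheses (TB : tensor_on (fun _ => True) iB) (EK : bilin_ext (fun _ => True) psi iA iB psiK).

Local Notation hK := (h%:A : K).
Let bpsiK : is_bilin psiK := EK.1.
Let psiK_tensor a c : psiK (iA a) (iA c) = iB (psi a c) := EK.2 a c I I.

Lemma half_alg : 2%:R * hK = 1.
Proof. by rewrite -(rmorph_nat (in_alg K)) -rmorphM /= Hh scale1r. Qed.

Lemma skew_tensor a c : skew hK psiK (iA a) (iA c) = iB (skew h psi a c).
Proof. by rewrite /skew !psiK_tensor (tensorZ TB) (tensorB TB). Qed.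

Lemma twist_tensor x : twist hK psiK (iA x.1, iB x.2) = (iA x.1, iB (twist h psi x).2).
Proof. by rewrite /twist /= psiK_tensor (tensorD TB) (tensorZ TB). Qed.

Lemma untwist_tensor x :
  untwist hK psiK (iA x.1, iB x.2) = (iA x.1, iB (untwist h psi x).2).
Proof. by rewrite /untwist /= psiK_tensor (tensorB TB) (tensorZ TB). Qed.

Lemma span_skew x x' : span_of (LieG1 G) iA x -> span_of (LieG1 G) iA x' ->
  span_of (LieG2 G) iB (skew hK psiK x x').
Proof.
have bskew : is_bilin (skew hK psiK) := skew_bilin hK bpsiK.
move=> Sx Sx'; apply: (span_linear (bilin_linl bskew x') _ Sx) => v G1v.
apply: (span_linear (bilin_linr bskew (iA v)) _ Sx') => w G1w.
by rewrite skew_tensor; apply: span_gen; apply: LieG2_skew.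
Qed.

Let S (z : AK * BK) := span_of (LieG1 G) iA z.1 /\ span_of (LieG2 G) iB z.2.

Lemma span_set_avg : almost_vg (skew hK psiK) S.
Proof.
split; [split; [|split] | split].
- by split; apply: span0.
- move=> [x y] [x' y'] [Sx Sy] [Sx' Sy']; split; first exact: spanD.
  by apply: spanD; [apply: spanD | apply: span_skew].
- move=> [x y] [Sx Sy]; rewrite /vinv /= skew_diag addr0.
  by split; rewrite /= -scaleN1r; apply: spanZ.
- by move=> l [x y] [Sx Sy]; split; apply: spanZ.
- by move=> l y [_ Sy]; split; [apply: span0 | apply: spanZ].
Qed.

Lemma cond3_half : cond3 G iA iB psiK.
Proof.
move=> y hGy.
have SF : almost_vg psiK (fun z => S (untwist hK psiK z)).
  apply: (almost_vg_preim bpsiK (skew_bilin hK bpsiK) _ span_set_avg).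
  exact: (untwist_morphism half_alg bpsiK).
have SF_gen g : G g -> S (untwist hK psiK (iA g.1, iB g.2)).
  case: g => a b Gab; rewrite untwist_tensor; split; apply: span_gen; first by exists b.
  exact: (avg_untwist HG bpsi Hh Gab).
have [_] := hGy _ SF SF_gen.
by rewrite /untwist /= (bilin0l bpsiK) scaler0 subr0.
Qed.

Variables (L1K L2K : lmodType K) (i1 : A -> L1K) (i2 : B -> L2K).
Variables (psiLK : L1K -> L1K -> L2K) (j1 : L1K -> AK) (j2 : L2K -> BK).
Hypotheses (T1 : tensor_on (LieG1 G) i1)
  (EL : bilin_ext (LieG1 G) (skew h psi) i1 i2 psiLK)
  (J1 : klinear j1) (J1i : forall a, LieG1 G a -> j1 (i1 a) = iA a)
  (J2 : klinear j2) (J2i : forall b, LieG2 G b -> j2 (i2 b) = iB b).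

Local Notation lift := (fun z : L1K * L2K => twist hK psiK (j1 z.1, j2 z.2)).

Lemma j_bracket x y : j2 (psiLK x y) = skew hK psiK (j1 x) (j1 y).
Proof.
apply: (tensor_bilin_unique T1 (f := fun x y => j2 (psiLK x y))
  (g := fun x y => skew hK psiK (j1 x) (j1 y))).
- exact: (bilin_postcomp EL.1 J2).
- exact: (bilin_precomp (skew_bilin hK bpsiK) J1).
move=> a c G1a G1c; rewrite EL.2 // J2i; last exact: LieG2_skew.
by rewrite !J1i // skew_tensor.
Qed.

Lemma jmap_morphism :
  vg_morphism psiLK (skew hK psiK) (fun z => (j1 z.1, j2 z.2)).
Proof.
split=> [[x y] [x' y']|l [x y]|y|l y] /=.
- by rewrite !(linD J1) !(linD J2) j_bracket.
- by rewrite !(linZ J1) !(linZ J2).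
- exact: (lin0 J1).
- by rewrite (linZ J2).
Qed.

Lemma lift_morphism : vg_morphism psiLK psiK lift.
Proof. exact: (vg_morphism_comp jmap_morphism (twist_morphism half_alg bpsiK)). Qed.

Lemma hatG_lift z : hatG (lie_set G) i1 i2 psiLK z -> hatG G iA iB psiK (lift z).
Proof.
move=> hLz; apply: (hLz _ (almost_vg_preim EL.1 bpsiK lift_morphism
  (hatG_avg G iA iB psiK))).
case=> a b [G1a G2b] /=; rewrite J1i // J2i // (twist_tensor (a, b)).
exact: (hatG_gen (lie_set_twist Hh bpsi HG (conj G1a G2b))).
Qed.

Lemma hatG_lift_onto y : hatG G iA iB psiK y ->
  exists z, hatG (lie_set G) i1 i2 psiLK z /\ lift z = y.
Proof.
move=> hGy; apply: (hGy _ (almost_vg_image EL.1 bpsiK lift_morphism half_alg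
  (hatG_avg (lie_set G) i1 i2 psiLK))).
case=> a b Gab; have Lab := lie_set_untwist Hh bpsi HG Gab; have [G1a G2b] := Lab.
exists (i1 a, i2 (untwist h psi (a, b)).2); split; first exact: (hatG_gen Lab).
by rewrite /= J1i // J2i // -(untwist_tensor (a, b)) untwistK.
Qed.
End BaseChange.

Lemma vector_group_half (Phi : comPzRingType) (h : Phi) (U V : lmodType Phi)
    (phi : U -> U -> V) (G : U * V -> Prop) :
  2%:R * h = 1 -> almost_vg phi G -> vector_group phi G.
Proof. by move=> Hh HG; split=> // no_half; case: no_half; exists h. Qed.

Unset Implicit Arguments. Set Strict Implicit.

Theorem lemma1p11 (Phi : comPzRingType) (h : Phi) (Hh : 2%:R * h = 1) :
  (* (i) a Z-graded Lie algebra L1 (+) L2 (bracket [L1,L1] <= L2, all other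
     brackets zero; Jacobi is then automatic) gives the vector group
     L1 x L2 with psi_L(a,c) = [a,c]/2 *)
  (forall (L1 L2 : lmodType Phi) (br : L1 -> L1 -> L2),
     is_bilin br -> (forall a, br a a = 0) ->
     vector_group (fun a c => h *: br a c) (fun _ : L1 * L2 => True)) /\
  (forall (A B : lmodType Phi) (psi : A -> A -> B), is_bilin psi ->
  (forall G : A * B -> Prop, vector_group psi G ->
   (* L = Lie(G) = pi_A(G) (+) G_2 as a vector group, psiL = bracket / 2 *)
   let L := fun x : A * B => LieG1 G x.1 /\ LieG2 G x.2 in
   let psiL := fun a c : A => h *: LieG_br psi a c in
   let f := fun x : A * B => (x.1, x.2 - h *: psi x.1 x.1) in
   (* (ii) *)
   (vector_group psiL L /\
    (forall x, G x -> L (f x)) /\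
    (forall y, L y -> exists x, G x /\ f x = y) /\
    (forall x y, f x = f y -> x = y) /\
    (forall x y, G x -> G y -> f (vmul psi x y) = vmul psiL (f x) (f y)) /\
    (forall (l : Phi) x, G x -> f (smul1 l x) = smul1 l (f x)) /\
    (forall x, G x -> (x.1 = 0 <-> (f x).1 = 0)) /\
    (forall (l : Phi) b, G (0, b) -> f (smul2 l (0, b)) = smul2 l (f (0, b)))) /\
   (* (iii) the induced map hat L(K) -> hat G(K), (x,y) |-> (x, y + psiK(x,x)/2),
      is a Phi-group epimorphism *)
   (forall (K : comAlgType Phi)
      (AK BK : lmodType K) (iA : A -> AK) (iB : B -> BK) (psiK : AK -> AK -> BK)
      (L1K L2K : lmodType K) (i1 : A -> L1K) (i2 : B -> L2K)
      (psiLK : L1K -> L1K -> L2K) (j1 : L1K -> AK) (j2 : L2K -> BK),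
      tensor_on (fun _ => True) iA -> tensor_on (fun _ => True) iB ->
      bilin_ext (fun _ => True) psi iA iB psiK ->
      tensor_on (LieG1 G) i1 -> tensor_on (LieG2 G) i2 ->
      bilin_ext (LieG1 G) psiL i1 i2 psiLK ->
      klinear j1 -> (forall a, LieG1 G a -> j1 (i1 a) = iA a) ->
      klinear j2 -> (forall b, LieG2 G b -> j2 (i2 b) = iB b) ->
      let F := fun z : L1K * L2K =>
        (j1 z.1, j2 z.2 + h%:A *: psiK (j1 z.1) (j1 z.1)) in
      let hL := hatG L i1 i2 psiLK in
      let hG := hatG G iA iB psiK in
      (forall z, hL z -> hG (F z)) /\
      (forall z w, hL z -> hL w -> F (vmul psiLK z w) = vmul psiK (F z) (F w)) /\
      (forall y, hG y -> exists z, hL z /\ F z = y) /\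
      (forall (l : Phi) z, hL z -> F (smul1 (l%:A : K) z) = smul1 (l%:A : K) (F z)) /\
      (forall (l : Phi) y, hL (0, y) ->
         (F (0, y)).1 = 0 /\ F (smul2 (l%:A : K) (0, y)) = smul2 (l%:A : K) (F (0, y))))) /\
   (* hence condition (3) also holds when 1/2 is in Phi *)
   (forall G : A * B -> Prop, almost_vg psi G ->
    forall (K : comAlgType Phi) (AK BK : lmodType K) (iA : A -> AK) (iB : B -> BK)
      (psiK : AK -> AK -> BK),
      tensor_on (fun _ => True) iA -> tensor_on (fun _ => True) iB ->
      bilin_ext (fun _ => True) psi iA iB psiK ->
      cond3 G iA iB psiK)).
Proof.
split.
  by move=> L1 L2 br _ _; apply: (vector_group_half Hh); do !split.
move=> A B psi bpsi; split; last first.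
  by move=> G HG K AK BK iA iB psiK _ TB EK; apply: (cond3_half Hh bpsi HG TB EK).
move=> G [HG _]; cbv zeta.
have [uM uZ1 _ uZ2] := untwist_morphism Hh bpsi.
split.
  split; [|split; [|split; [|split; [|split; [|split; [|split]]]]]].
  - exact: (vector_group_half Hh (lie_set_avg h bpsi HG)).
  - exact: (lie_set_untwist Hh bpsi HG).
  - move=> y Ly; exists (twist h psi y).
    by split; [exact: (lie_set_twist Hh bpsi HG) | exact: twistK].
  - exact: (can_inj (untwistK h psi)).
  - by move=> x y _ _; apply: uM.
  - by move=> l x _; apply: uZ1.
  - by [].
  - by move=> l b _; apply: uZ2.
move=> K AK BK iA iB psiK L1K L2K i1 i2 psiLK j1 j2 _ TB EK T1 _ EL J1 J1i J2 J2i.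
have [lM lZ1 l0 lZ2] := lift_morphism Hh bpsi HG TB EK T1 EL J1 J1i J2 J2i.
split; [|split; [|split; [|split]]].
- exact: (hatG_lift Hh bpsi HG TB EK T1 EL J1 J1i J2 J2i).
- by move=> z w _ _; apply: lM.
- exact: (hatG_lift_onto Hh bpsi HG TB EK T1 EL J1 J1i J2 J2i).
- by move=> l z _; apply: lZ1.
- by move=> l y _; split; [apply: l0 | apply: lZ2].
Qed.
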